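(* Let $\vartheta$ be a primitive semi-compatible random substitution. Then for all $1\leqslant i\leqslant n$, \[ \frac{1}{\lambda}\bm q_1^\intercal\bm R\;\leqslant\;\underline s_i^I\;\leqslant\;\overline s_i^I\;\leqslant\;\frac{1}{\lambda-1}\bm q_1^\intercal\bm R . \] The lower bound is an equality if the identical set condition holds, and the upper bound is an equality if the disjoint set condition holds. Moreover, $\frac{1}{\lambda^r}\bm q_r^\intercal\bm R\leqslant\underline s_i^I$ for every $r\in\mathbb N$, and $r\mapsto\frac{1}{\lambda^r}\bm q_r^\intercal\bm R$ is monotonically non-decreasing.
   Context: Let $\mathcal A=\{a_1,\dots,a_n\}$ be a finite alphabet, $\mathcal A^+$ the finite non-empty words over $\mathcal A$. A random substitution is a map $\vartheta$ from $\mathcal A$ to finite non-empty subsets of $\mathcal A^+$, extended to words by $\vartheta(u_1\cdots u_m)=\{w_1\cdots w_m: w_k\in\vartheta(u_k)\}$ and to sets of words by taking unions; powers $\vartheta^m$ are compositions. $|u|_a$ is the number of occurrences of letter $a$ in $u$, $\Phi(u)=(|u|_{a_1},\dots,|u|_{a_n})^\intercal$. $\vartheta$ is semi-compatible if for each $a$ all words in $\vartheta(a)$ have the same $\Phi$; then all words in $\vartheta^m(a_i)$ have a common length $\ell_{m,i}$. The substitution matrix is $M_{ij}=|u|_{a_i}$, $u\in\vartheta(a_j)$; $\vartheta$ is primitive if $M$ is a primitive matrix, $\lambda$ denotes its Perron–Frobenius eigenvalue and $\bm R,\bm L$ its right and left PF eigenvectors normalised by $\|\bm R\|_1=1=\bm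 L^\intercal\bm R$. Set $q_{m,i}=\log(\#\vartheta^m(a_i))$, $\bm q_m=(q_{m,1},\dots,q_{m,n})^\intercal$. The lower and upper inflation word entropies of type $i$ are $\underline s_i^I=\liminf_{m\to\infty} q_{m,i}/\ell_{m,i}$ and $\overline s_i^I=\limsup_{m\to\infty}q_{m,i}/\ell_{m,i}$. Identical set condition: for all $i$, $m\in\mathbb N$, $u,v\in\vartheta(a_i)$: $\vartheta^m(u)=\vartheta^m(v)$. Disjoint set condition: for all $i$, $m\in\mathbb N$, $u\neq v\in\vartheta(a_i)$: $\vartheta^m(u)\cap\vartheta^m(v)=\varnothing$. *)

From Stdlib Require Import Reals Lra Lia Arith List.
Import ListNotations.
Open Scope R_scope.

(* Alphabet A = {0, ..., n-1} (letter a_i is the natural number i-1).  A random substitution is given by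
   th : nat -> list (list nat), th a being (a list enumerating) the finite
   set theta(a); duplicates in the list are irrelevant (sets are compared
   by membership, cardinalities are taken after removing duplicates). *)

Definition word := list nat.
Definition rsubst := nat -> list word.

Definition valid_rsubst (n : nat) (th : rsubst) : Prop :=
  forall a, (a < n)%nat ->
    th a <> [] /\
    forall u, In u (th a) -> u <> [] /\ forall b, In b u -> (b < n)%nat.

(* theta extended to words: {w_1 ... w_m : w_k in theta(u_k)} *)
Definition subst_word (th : rsubst) (u : word) : list word :=
  fold_right (fun a acc => flat_map (fun w => map (fun v => w ++ v) acc) (th a))
             [[]] u.

Definition subst_set (th : rsubst) (S : list word) : list word :=
  flat_map (subst_word th) S.

Definition subst_pow (th : rsubst) (m : nat) (u : word) : list word :=
  Nat.iter m (subst_set th) [u].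

Definition occ (u : word) (b : nat) : nat := count_occ Nat.eq_dec u b.

Definition semi_compatible (n : nat) (th : rsubst) : Prop :=
  forall a, (a < n)%nat -> forall u v, In u (th a) -> In v (th a) ->
    forall b, (b < n)%nat -> occ u b = occ v b.

Definition subst_mat (th : rsubst) (i j : nat) : nat := occ (hd [] (th j)) i.

Fixpoint nsum (n : nat) (f : nat -> nat) : nat :=
  match n with O => O | S k => (nsum k f + f k)%nat end.

Fixpoint rsum (n : nat) (f : nat -> R) : R :=
  match n with O => 0 | S k => rsum k f + f k end.

Fixpoint mat_pow (n : nat) (M : nat -> nat -> nat) (k : nat) (i j : nat) : nat :=
  match k with
  | O => if Nat.eqb i j then 1%nat else 0%nat
  | S k' => nsum n (fun l => M i l * mat_pow n M k' l j)%nat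
  end.

Definition primitive_mat (n : nat) (M : nat -> nat -> nat) : Prop :=
  exists k, forall i j, (i < n)%nat -> (j < n)%nat -> (0 < mat_pow n M k i j)%nat.

(* lam is the Perron-Frobenius eigenvalue of M and Rv the right PF eigenvector
   normalised by ||Rv||_1 = 1: Rv is a strictly positive right eigenvector
   with eigenvalue lam (for a primitive matrix this determines exactly the
   PF eigenvalue and the PF eigenvector up to scaling). *)
Definition PF_right (n : nat) (M : nat -> nat -> nat) (lam : R) (Rv : nat -> R) : Prop :=
  (forall i, (i < n)%nat -> 0 < Rv i) /\
  rsum n Rv = 1 /\
  forall i, (i < n)%nat -> rsum n (fun j => INR (M i j) * Rv j) = lam * Rv i.

Definition card_pow (th : rsubst) (m i : nat) : nat :=
  length (nodup (list_eq_dec Nat.eq_dec) (subst_pow th m [i])).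

Definition q (th : rsubst) (m i : nat) : R := ln (INR (card_pow th m i)).

(* l_{m,i}: common length of the words in theta^m(a_i) *)
Definition ell (th : rsubst) (m i : nat) : R := INR (length (hd [] (subst_pow th m [i]))).

Definition qR (n : nat) (th : rsubst) (Rv : nat -> R) (r : nat) : R :=
  rsum n (fun i => q th r i * Rv i).

Definition is_liminf (u : nat -> R) (l : R) : Prop :=
  forall eps, 0 < eps ->
    (exists N, forall m, (N <= m)%nat -> l - eps < u m) /\
    (forall N, exists m, (N <= m)%nat /\ u m < l + eps).

Definition is_limsup (u : nat -> R) (l : R) : Prop :=
  forall eps, 0 < eps ->
    (exists N, forall m, (N <= m)%nat -> u m < l + eps) /\
    (forall N, exists m, (N <= m)%nat /\ l - eps < u m).

Definition identical_set_cond (n : nat) (th : rsubst) : Prop :=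
  forall i, (i < n)%nat -> forall m, (1 <= m)%nat -> forall u v,
    In u (th i) -> In v (th i) ->
    forall w, In w (subst_pow th m u) <-> In w (subst_pow th m v).

Definition disjoint_set_cond (n : nat) (th : rsubst) : Prop :=
  forall i, (i < n)%nat -> forall m, (1 <= m)%nat -> forall u v,
    In u (th i) -> In v (th i) -> u <> v ->
    forall w, ~ (In w (subst_pow th m u) /\ In w (subst_pow th m v)).

(* Write M^T for the transposed substitution matrix acting on letter weights z : nat -> R,
   (M^T z)_i = sum_b M_(b i) z_b, and R for the right Perron-Frobenius eigenvector.
   Semi-compatibility gives the exact recursion ell_(m+1) = M^T ell_m for the lengths and,
   since theta^(m+1)(a_i) is the union over u in theta(a_i) of the sets theta^m(u), which
   all have cardinality exp((M^T q_m)_i), the bounds M^T q_m <= q_(m+1) <= q_1 + M^T q_m,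
   with equality on the left (resp. right) under the identical (resp. disjoint) set condition.
   A Birkhoff-type contraction argument for a strictly positive power of M shows that
   ((M^T)^j x)_i / ((M^T)^j y)_i -> x^T R / y^T R for y > 0.  Comparing q_m with
   (M^T)^(m-r) q_r from below and with sum_(j<m) (M^T)^j q_1 from above then yields the
   lower bounds q_r^T R / lam^r and the upper bound q_1^T R / (lam - 1). *)

From Stdlib Require Import Reals Lra Lia List Classical.
From Coquelicot Require Import Lim_seq.
Import ListNotations.
Open Scope R_scope.

(** * Finite sums of reals *)

Lemma rsum_ext n f g : (forall i, (i < n)%nat -> f i = g i) -> rsum n f = rsum n g.
Proof. induction n; intro H; simpl; auto. rewrite IHn, H; auto. Qed.

Lemma rsum_zero n : rsum n (fun _ => 0) = 0.
Proof. induction n; simpl; lra. Qed.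

Lemma rsum_plus n f g : rsum n (fun i => f i + g i) = rsum n f + rsum n g.
Proof. induction n; simpl. lra. rewrite IHn. lra. Qed.

Lemma rsum_scal n c f : rsum n (fun i => c * f i) = c * rsum n f.
Proof. induction n; simpl. lra. rewrite IHn. lra. Qed.

Lemma rsum_first n f : rsum (S n) f = f O + rsum n (fun i => f (S i)).
Proof. induction n; simpl in *. lra. rewrite IHn. lra. Qed.

Lemma rsum_swap n m f :
  rsum n (fun i => rsum m (fun j => f i j)) = rsum m (fun j => rsum n (fun i => f i j)).
Proof. induction n; simpl. rewrite rsum_zero; auto. rewrite IHn, <- rsum_plus. reflexivity. Qed.

Lemma rsum_le n f g : (forall i, (i < n)%nat -> f i <= g i) -> rsum n f <= rsum n g.
Proof.
  induction n; intro H; simpl. lra.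
  assert (f n <= g n) by auto. assert (rsum n f <= rsum n g) by auto. lra.
Qed.

Lemma rsum_nonneg n f : (forall i, (i < n)%nat -> 0 <= f i) -> 0 <= rsum n f.
Proof. intro H. rewrite <- (rsum_zero n). apply rsum_le. auto. Qed.

Lemma rsum_ge_term n f j :
  (forall i, (i < n)%nat -> 0 <= f i) -> (j < n)%nat -> f j <= rsum n f.
Proof.
  induction n; intros H Hj. lia. simpl.
  assert (0 <= f n) by auto. destruct (Nat.eq_dec j n) as [->|].
  - assert (0 <= rsum n f) by (apply rsum_nonneg; auto). lra.
  - assert (f j <= rsum n f) by (apply IHn; auto; lia). lra.
Qed.

Lemma rsum_pos n f : (0 < n)%nat -> (forall i, (i < n)%nat -> 0 < f i) -> 0 < rsum n f.
Proof.
  intros Hn H. assert (0 < f 0%nat) by auto.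
  assert (f 0%nat <= rsum n f) by (apply rsum_ge_term; auto; intros; left; auto). lra.
Qed.

Lemma rsum_delta n f a :
  (a < n)%nat -> rsum n (fun c => (if Nat.eq_dec a c then 1 else 0) * f c) = f a.
Proof.
  induction n; intro H. lia. simpl. destruct (Nat.eq_dec a n) as [->|].
  - rewrite (rsum_ext _ _ (fun _ => 0)), rsum_zero. lra.
    intros i Hi. destruct (Nat.eq_dec n i). lia. lra.
  - rewrite IHn by lia. lra.
Qed.

Lemma INR_nsum n f : INR (nsum n f) = rsum n (fun i => INR (f i)).
Proof. induction n; simpl. auto. rewrite plus_INR, IHn. auto. Qed.

(** * Cardinality of finite sets of words given as lists *)

Definition wdec := list_eq_dec Nat.eq_dec.

Definition card (l : list word) : nat := length (nodup wdec l).

Lemma card_incl l1 l2 : incl l1 l2 -> (card l1 <= card l2)%nat.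
Proof.
  intro H. apply NoDup_incl_length. apply NoDup_nodup.
  intros x Hx. apply nodup_In, H, (nodup_In wdec), Hx.
Qed.

Lemma card_ext l1 l2 : (forall x, In x l1 <-> In x l2) -> card l1 = card l2.
Proof. intro H. apply Nat.le_antisymm; apply card_incl; intros x Hx; apply H, Hx. Qed.

Lemma card_nodup l : NoDup l -> card l = length l.
Proof. intro H. unfold card. rewrite nodup_fixed_point; auto. Qed.

Lemma card_pos l : l <> [] -> (1 <= card l)%nat.
Proof.
  intro H. destruct l as [|w l]. congruence.
  assert (Hw : In w (nodup wdec (w :: l))) by (apply nodup_In; left; auto).
  unfold card. destruct (nodup wdec (w :: l)). inversion Hw. simpl; lia.
Qed.

Lemma card_app_nodup l1 l2 : card (l1 ++ l2) = card (nodup wdec l1 ++ nodup wdec l2).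
Proof. apply card_ext. intro x. rewrite !in_app_iff, !nodup_In. tauto. Qed.

Lemma card_app_le l1 l2 : (card (l1 ++ l2) <= card l1 + card l2)%nat.
Proof.
  rewrite card_app_nodup. unfold card.
  rewrite <- length_app. apply NoDup_incl_length. apply NoDup_nodup.
  intros x Hx. apply (nodup_In wdec), Hx.
Qed.

Lemma card_app_disj l1 l2 : (forall x, In x l1 -> ~ In x l2) ->
  card (l1 ++ l2) = (card l1 + card l2)%nat.
Proof.
  intro H. rewrite card_app_nodup, card_nodup, length_app by
    (apply NoDup_app; try apply NoDup_nodup; intros a Ha Hb;
     rewrite nodup_In in Ha, Hb; apply (H a); auto).
  reflexivity.
Qed.

Lemma app_same_len (a b c d : word) : length a = length c -> a ++ b = c ++ d -> a = c.
Proof.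
  intros Hl He. apply app_eq_app in He.
  destruct He as [l [[-> ->]|[-> ->]]]; rewrite length_app in Hl;
  destruct l; try (simpl in Hl; lia); now rewrite app_nil_r.
Qed.

Definition prodl (d1 d2 : list word) : list word :=
  flat_map (fun w1 => map (fun w2 => w1 ++ w2) d2) d1.

Lemma prodl_In d1 d2 w :
  In w (prodl d1 d2) <-> exists w1 w2, In w1 d1 /\ In w2 d2 /\ w = w1 ++ w2.
Proof.
  unfold prodl. rewrite in_flat_map. split.
  - intros [w1 [H1 H2]]. apply in_map_iff in H2. destruct H2 as [w2 [E H2]]. eauto.
  - intros [w1 [w2 [H1 [H2 E]]]]. exists w1. split; auto. apply in_map_iff. eauto.
Qed.

Lemma prodl_length d1 d2 : length (prodl d1 d2) = (length d1 * length d2)%nat.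
Proof. induction d1; simpl. auto. rewrite length_app, length_map. unfold prodl, word in *. lia. Qed.

Lemma prodl_nodup d1 d2 L : NoDup d1 -> NoDup d2 -> (forall w, In w d1 -> length w = L) ->
  NoDup (prodl d1 d2).
Proof.
  induction d1 as [|a d1 IH]; intros H1 H2 HL; simpl. constructor.
  inversion H1; subst. apply NoDup_app.
  - apply NoDup_map_NoDup_ForallPairs; auto. intros x y _ _ E. eapply app_inv_head; eauto.
  - apply IH; auto. intros; apply HL; right; auto.
  - intros x Hx Hy. apply in_map_iff in Hx. destruct Hx as [w2 [<- _]].
    apply prodl_In in Hy. destruct Hy as [w1 [w2' [Hw1 [_ E]]]].
    assert (a = w1) as <-; [|contradiction].
    apply (app_same_len a w2 w1 w2'); auto. rewrite (HL a), (HL w1); auto; [right|left]; auto.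
Qed.

Lemma card_prod l1 l2 L l : (forall w, In w l1 -> length w = L) ->
  (forall w, In w l <-> exists w1 w2, In w1 l1 /\ In w2 l2 /\ w = w1 ++ w2) ->
  card l = (card l1 * card l2)%nat.
Proof.
  intros HL Hl.
  rewrite (card_ext l (prodl (nodup wdec l1) (nodup wdec l2))).
  - rewrite card_nodup, prodl_length. reflexivity.
    apply prodl_nodup with L; try apply NoDup_nodup.
    intros w Hw. apply HL, (nodup_In wdec), Hw.
  - intro x. rewrite Hl, prodl_In.
    split; intros [w1 [w2 [A [B C]]]]; exists w1, w2; rewrite ?nodup_In in *; auto.
Qed.

Lemma card_flat_le {A} (f : A -> list word) D C : (forall u, In u D -> card (f u) = C) ->
  (card (flat_map f D) <= length D * C)%nat.
Proof.
  induction D as [|a D IH]; intro H; simpl. unfold card; simpl; lia.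
  eapply Nat.le_trans. apply card_app_le. rewrite H by (left; auto).
  pose proof (IH (fun u Hu => H u (or_intror Hu))). lia.
Qed.

Lemma card_flat_eq {A} (f : A -> list word) D C : NoDup D ->
  (forall u, In u D -> card (f u) = C) ->
  (forall u v w, In u D -> In v D -> u <> v -> In w (f u) -> ~ In w (f v)) ->
  card (flat_map f D) = (length D * C)%nat.
Proof.
  induction D as [|a D IH]; intros ND H Hd; simpl. unfold card; simpl; lia.
  inversion ND; subst. rewrite card_app_disj, H, IH.
  - simpl; lia.
  - auto.
  - intros u Hu. apply H; right; auto.
  - intros u v w Hu Hv. apply Hd; right; auto.
  - left; auto.
  - intros x Hx Hy. apply in_flat_map in Hy. destruct Hy as [b [Hb Hy]].
    apply (Hd a b x); auto with datatypes. intros ->; contradiction.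
Qed.

Lemma ln_card_le (a b : nat) : (1 <= a)%nat -> (a <= b)%nat -> ln (INR a) <= ln (INR b).
Proof.
  intros Ha Hab. apply le_INR in Ha, Hab. simpl in Ha. destruct Hab as [Hab| ->]; [|lra].
  left. apply ln_increasing; lra.
Qed.

Lemma ln_card_mult (a b : nat) : (1 <= a)%nat -> (1 <= b)%nat ->
  ln (INR (a * b)) = ln (INR a) + ln (INR b).
Proof. intros Ha Hb. rewrite mult_INR. apply ln_mult; apply lt_0_INR; lia. Qed.

(** * Lower and upper limits of real sequences *)

(* A sequence bounded below, and eventually bounded above, has a finite liminf and limsup
   (Coquelicot's liminf/limsup in the extended reals cannot be infinite). *)
Lemma liminf_exists (u : nat -> R) a b : (forall m, a <= u m) ->
  (exists N, forall m, (N <= m)%nat -> u m <= b) -> exists l, is_liminf u l.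
Proof.
  intros Ha [N Hb]. destruct (ex_LimInf_seq u) as [[l| |] H].
  - exists l. intros eps Heps. destruct (H (mkposreal eps Heps)) as [H1 H2]. split; auto.
  - destruct (H b) as [N' HN']. specialize (HN' (Nat.max N N') ltac:(lia)).
    specialize (Hb (Nat.max N N') ltac:(lia)). lra.
  - destruct (H a 0%nat) as [m [_ Hm]]. specialize (Ha m). lra.
Qed.

Lemma limsup_exists (u : nat -> R) a b : (forall m, a <= u m) ->
  (exists N, forall m, (N <= m)%nat -> u m <= b) -> exists l, is_limsup u l.
Proof.
  intros Ha [N Hb]. destruct (ex_LimSup_seq u) as [[l| |] H].
  - exists l. intros eps Heps. destruct (H (mkposreal eps Heps)) as [H1 H2]. split; auto.
  - destruct (H b N) as [m [Hm1 Hm2]]. specialize (Hb m Hm1). lra.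
  - destruct (H a) as [N' HN']. specialize (HN' N' (le_n _)). specialize (Ha N'). lra.
Qed.

Lemma liminf_ge u l a : is_liminf u l ->
  (forall eps, 0 < eps -> exists N, forall m, (N <= m)%nat -> a - eps <= u m) -> a <= l.
Proof.
  intros H Ha. destruct (Rle_lt_dec a l); auto.
  set (e := (a - l) / 3). assert (He : 0 < e) by (unfold e; lra).
  destruct (H e He) as [_ H2]. destruct (Ha e He) as [N HN]. destruct (H2 N) as [m [Hm Hum]].
  specialize (HN m Hm). unfold e in *. lra.
Qed.

Lemma limsup_le u s b : is_limsup u s ->
  (forall eps, 0 < eps -> exists N, forall m, (N <= m)%nat -> u m <= b + eps) -> s <= b.
Proof.
  intros H Hb. destruct (Rle_lt_dec s b); auto.
  set (e := (s - b) / 3). assert (He : 0 < e) by (unfold e; lra).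
  destruct (H e He) as [_ H2]. destruct (Hb e He) as [N HN]. destruct (H2 N) as [m [Hm Hum]].
  specialize (HN m Hm). unfold e in *. lra.
Qed.

Lemma liminf_le_limsup u l s : is_liminf u l -> is_limsup u s -> l <= s.
Proof.
  intros Hl Hs. destruct (Rle_lt_dec l s); auto.
  set (e := (l - s) / 3). assert (He : 0 < e) by (unfold e; lra).
  destruct (Hl e He) as [[N1 H1] _]. destruct (Hs e He) as [[N2 H2] _].
  specialize (H1 (N1 + N2)%nat ltac:(lia)). specialize (H2 (N1 + N2)%nat ltac:(lia)).
  unfold e in *. lra.
Qed.

Lemma liminf_conv u l L : is_liminf u l ->
  (forall eps, 0 < eps -> exists N, forall m, (N <= m)%nat -> Rabs (u m - L) < eps) -> l = L.
Proof.
  intros H HL. apply Rle_antisym.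
  - destruct (Rle_lt_dec l L); auto.
    set (e := (l - L) / 3). assert (He : 0 < e) by (unfold e; lra).
    destruct (H e He) as [[N1 H1] _]. destruct (HL e He) as [N2 H2].
    specialize (H1 (N1 + N2)%nat ltac:(lia)). specialize (H2 (N1 + N2)%nat ltac:(lia)).
    apply Rabs_def2 in H2. unfold e in *. lra.
  - apply (liminf_ge u); auto. intros eps Heps. destruct (HL eps Heps) as [N HN]. exists N.
    intros m Hm. specialize (HN m Hm). apply Rabs_def2 in HN. lra.
Qed.

Lemma le_eps a x : (forall eps, 0 < eps -> a - eps <= x) -> a <= x.
Proof. intro H. destruct (Rle_lt_dec a x); auto. specialize (H ((a - x) / 2) ltac:(lra)). lra. Qed.

(** * Growth of partial sums relative to a geometrically growing sequence *)

Lemma bernoulli x r : 0 <= x -> 1 + INR r * x <= (1 + x) ^ r.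
Proof.
  intro Hx. induction r. simpl; lra. rewrite S_INR. simpl.
  assert (0 <= INR r * x) by (apply Rmult_le_pos; auto; apply pos_INR). nra.
Qed.

Lemma partial_sum_geometric (a e : nat -> R) c rho J :
  0 <= c -> 1 < rho -> (forall j, 0 < e j) ->
  (forall j, (J <= j)%nat -> a j <= c * e j) ->
  (forall j, (J <= j)%nat -> rho * e j <= e (S j)) ->
  forall d, rsum (J + d) a <= rsum J a + c / (rho - 1) * e (J + d)%nat /\
            (1 + INR d * (rho - 1)) * e J <= e (J + d)%nat.
Proof.
  intros Hc Hrho He Ha Hg.
  set (B := c / (rho - 1)).
  assert (HB : 0 <= B) by (unfold B, Rdiv; apply Rmult_le_pos; [lra|left; apply Rinv_0_lt_compat; lra]).
  assert (EB : B * rho = B + c) by (unfold B; field; lra).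
  induction d as [|d [IH1 IH2]].
  - rewrite Nat.add_0_r. specialize (He J). simpl INR. nra.
  - replace (J + S d)%nat with (S (J + d)) by lia. simpl rsum.
    assert (G : rho * e (J + d)%nat <= e (S (J + d))) by (apply Hg; lia).
    assert (A : a (J + d)%nat <= c * e (J + d)%nat) by (apply Ha; lia).
    pose proof (He J). pose proof (He (J + d)%nat). pose proof (pos_INR d). rewrite S_INR.
    split.
    + assert (0 <= B * (e (S (J + d)) - rho * e (J + d)%nat)) by (apply Rmult_le_pos; lra). nra.
    + assert (0 <= INR d * (rho - 1) * e J) by (apply Rmult_le_pos; [apply Rmult_le_pos|]; lra).
      assert (0 <= (rho - 1) * (e (J + d)%nat - e J)) by (apply Rmult_le_pos; lra). nra.
Qed.

(* del |-> del + (c + del) / (d - del) is continuous at 0 with value c / d; an explicit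
   del achieving tolerance eps *)
Lemma slack_choice d c eps : 0 < d -> 0 <= c -> 0 < eps -> exists del, 0 < del /\ del <= d / 2 /\
  del + (c + del) / (d - del) <= c / d + eps.
Proof.
  intros Hd Hc He. set (W := d * d + 2 * (d + c)). assert (HW : 0 < W) by (unfold W; nra).
  set (del := Rmin (d / 2) (eps * (d * d) / W)). exists del.
  assert (H1 : del <= d / 2) by apply Rmin_l.
  assert (H2 : del <= eps * (d * d) / W) by apply Rmin_r.
  assert (H0 : 0 < del)
    by (apply Rmin_pos; [lra|apply Rdiv_lt_0_compat; [apply Rmult_lt_0_compat; nra|auto]]).
  split; auto. split; auto.
  set (D := d - del). assert (HD : d / 2 <= D) by (unfold D; lra).
  assert (E : (c + del) / D = c / d + del * (d + c) / (d * D)) by (unfold D; field; lra).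
  rewrite E.
  assert (F : del * (d + c) / (d * D) <= 2 * del * (d + c) / (d * d)).
  { unfold Rdiv. rewrite !Rinv_mult.
    assert (/ D <= 2 * / d).
    { replace (2 * / d) with (/ (d / 2)) by (field; lra). apply Rinv_le_contravar; lra. }
    assert (0 <= del * (d + c) * / d) by (apply Rmult_le_pos; [nra|left; apply Rinv_0_lt_compat; auto]).
    nra. }
  assert (G : del + 2 * del * (d + c) / (d * d) = del * W / (d * d)) by (unfold W; field; lra).
  assert (Hh : del * W / (d * d) <= eps).
  { apply Rmult_le_compat_r with (r := W) in H2; [|lra].
    replace (eps * (d * d) / W * W) with (eps * (d * d)) in H2 by (field; lra).
    replace eps with (eps * (d * d) / (d * d)) by (field; lra).
    unfold Rdiv. apply Rmult_le_compat_r; auto. left; apply Rinv_0_lt_compat; nra. }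
  lra.
Qed.

Lemma linear_growth_dominates (e : nat -> R) rho J S del : 1 < rho -> 0 < del -> 0 < e J ->
  (forall d, (1 + INR d * (rho - 1)) * e J <= e (J + d)%nat) ->
  exists d0, forall d, (d0 <= d)%nat -> S <= del * e (J + d)%nat.
Proof.
  intros Hrho Hdel HeJ Hgrow. assert (Hs : 0 < (rho - 1) * e J) by (apply Rmult_lt_0_compat; lra).
  destruct (INR_archimed ((rho - 1) * e J) (Rabs S / del) Hs) as [d0 Hd0].
  exists d0. intros d Hd. apply le_INR in Hd. specialize (Hgrow d).
  assert (INR d0 * ((rho - 1) * e J) <= INR d * ((rho - 1) * e J))
    by (apply Rmult_le_compat_r; lra).
  assert (Hlarge : Rabs S / del <= e (J + d)%nat) by nra.
  apply Rle_trans with (Rabs S); [apply Rle_abs|].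
  apply Rmult_le_compat_l with (r := del) in Hlarge; [|lra].
  replace (del * (Rabs S / del)) with (Rabs S) in Hlarge by (field; lra). exact Hlarge.
Qed.

Lemma partial_sum_ratio_limsup (a e : nat -> R) c lam :
  1 < lam -> 0 <= c -> (forall j, 0 < e j) ->
  (forall del, 0 < del -> exists J, forall j, (J <= j)%nat -> a j <= (c + del) * e j) ->
  (forall del, 0 < del -> exists J, forall j, (J <= j)%nat -> (lam - del) * e j <= e (S j)) ->
  forall eps, 0 < eps -> exists N, forall m, (N <= m)%nat -> rsum m a / e m <= c / (lam - 1) + eps.
Proof.
  intros Hlam Hc He Ha Hg eps Heps.
  destruct (slack_choice (lam - 1) c eps ltac:(lra) Hc Heps) as [del [Hdel [Hdel2 Hdel3]]].
  destruct (Ha del Hdel) as [J1 HJ1]. destruct (Hg del Hdel) as [J2 HJ2].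
  set (J := (J1 + J2)%nat). set (rho := lam - del).
  assert (HJa : forall j, (J <= j)%nat -> a j <= (c + del) * e j)
    by (intros j Hj; apply HJ1; unfold J in Hj; lia).
  assert (HJg : forall j, (J <= j)%nat -> rho * e j <= e (S j))
    by (intros j Hj; apply HJ2; unfold J in Hj; lia).
  pose proof (partial_sum_geometric a e (c + del) rho J ltac:(lra) ltac:(unfold rho; lra)
    He HJa HJg) as Hgeom.
  destruct (linear_growth_dominates e rho J (rsum J a) del ltac:(unfold rho; lra) Hdel (He J)
    (fun d => proj2 (Hgeom d))) as [d0 Hd0].
  exists (J + d0)%nat. intros m Hm. replace m with (J + (m - J))%nat by lia.
  set (d := (m - J)%nat). destruct (Hgeom d) as [C1 _].
  specialize (Hd0 d ltac:(unfold d; lia)).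
  set (em := e (J + d)%nat) in *. assert (Hem : 0 < em) by apply He.
  apply Rmult_le_reg_r with em; auto. unfold Rdiv at 1.
  rewrite Rmult_assoc, Rinv_l, Rmult_1_r by lra.
  unfold rho in *. replace (lam - 1 - del) with (lam - del - 1) in Hdel3 by ring.
  assert ((c + del) / (lam - del - 1) * em + del * em <= (c / (lam - 1) + eps) * em)
    by (rewrite <- Rmult_plus_distr_r; apply Rmult_le_compat_r; lra).
  lra.
Qed.

(** * Words and their images under the substitution *)

Section Substitution.

Variable n : nat.
Variable th : rsubst.

Definition over (u : word) : Prop := forall b, In b u -> (b < n)%nat.

Definition lsum (f : nat -> R) (u : word) : R := fold_right (fun a acc => f a + acc) 0 u.

Lemma over_cons a u : over (a :: u) <-> (a < n)%nat /\ over u.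
Proof. unfold over; simpl; split. intro H; split; auto. intros [H1 H2] b [<-|E]; auto. Qed.

Lemma over_app u v : over (u ++ v) <-> over u /\ over v.
Proof.
  unfold over; split. intro H; split; intros; apply H; apply in_app_iff; auto.
  intros [H1 H2] b Hb. apply in_app_iff in Hb; destruct Hb; auto.
Qed.

Lemma over_letter a : (a < n)%nat -> over [a].
Proof. intros H b [<-|[]]; auto. Qed.

Lemma lsum_occ f u : over u -> lsum f u = rsum n (fun c => INR (occ u c) * f c).
Proof.
  induction u as [|a u IH]; intro H; simpl.
  - rewrite (rsum_ext _ _ (fun _ => 0)); [symmetry; apply rsum_zero|]. intros; unfold occ; simpl; lra.
  - apply over_cons in H. destruct H as [Ha Hu]. rewrite IH by auto. unfold occ; simpl. symmetry.
    rewrite (rsum_ext n _ (fun c => (if Nat.eq_dec a c then 1 else 0) * f c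
                                   + INR (count_occ Nat.eq_dec u c) * f c)).
    + rewrite rsum_plus, rsum_delta; auto.
    + intros c _. destruct (Nat.eq_dec a c). rewrite S_INR. lra. lra.
Qed.

Lemma lsum_len u : lsum (fun _ => 1) u = INR (length u).
Proof. induction u; simpl. auto. rewrite IHu. destruct (length u); simpl; lra. Qed.

Lemma len_occ w : over w -> INR (length w) = rsum n (fun c => INR (occ w c)).
Proof. intro H. rewrite <- lsum_len, lsum_occ by auto. apply rsum_ext. intros; lra. Qed.

Lemma hd_In {A} (d : A) l : l <> [] -> In (hd d l) l.
Proof. destruct l. congruence. intros; left; auto. Qed.

Lemma sw_nil w : In w (subst_word th []) <-> w = [].
Proof. simpl. split. intros [H|[]]; auto. auto. Qed.

Lemma sw_cons a u w : In w (subst_word th (a :: u)) <->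
  exists x v, In x (th a) /\ In v (subst_word th u) /\ w = x ++ v.
Proof. change (subst_word th (a :: u)) with (prodl (th a) (subst_word th u)). apply prodl_In. Qed.

Lemma sw_app u1 u2 w : In w (subst_word th (u1 ++ u2)) <->
  exists w1 w2, In w1 (subst_word th u1) /\ In w2 (subst_word th u2) /\ w = w1 ++ w2.
Proof.
  revert w; induction u1 as [|a u1 IH]; intro w; simpl app.
  - split.
    + intro H. exists [], w. rewrite sw_nil. auto.
    + intros [w1 [w2 [H1 [H2 E]]]]. rewrite sw_nil in H1. subst. auto.
  - rewrite sw_cons. split.
    + intros [x [v [Hx [Hv ->]]]]. apply IH in Hv. destruct Hv as [w1 [w2 [H1 [H2 ->]]]].
      exists (x ++ w1), w2. rewrite sw_cons, app_assoc. split; eauto 6.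
    + intros [w1 [w2 [H1 [H2 ->]]]]. apply sw_cons in H1. destruct H1 as [x [v [Hx [Hv ->]]]].
      exists x, (v ++ w2). rewrite IH, app_assoc. split; eauto 6.
Qed.

Lemma ss_In S w : In w (subst_set th S) <-> exists u, In u S /\ In w (subst_word th u).
Proof. apply in_flat_map. Qed.

Lemma sp_S m u w : In w (subst_pow th (S m) u) <->
  exists v, In v (subst_pow th m u) /\ In w (subst_word th v).
Proof. apply ss_In. Qed.

Lemma sp_nil m w : In w (subst_pow th m []) <-> w = [].
Proof.
  revert w; induction m; intro w. simpl. split. intros [E|[]]; auto. auto.
  rewrite sp_S. split.
  - intros [v [Hv Hw]]. apply IHm in Hv. subst. apply sw_nil in Hw. auto.
  - intro E. exists []. rewrite IHm, sw_nil. auto.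
Qed.

Lemma sp_app m u1 u2 w : In w (subst_pow th m (u1 ++ u2)) <->
  exists w1 w2, In w1 (subst_pow th m u1) /\ In w2 (subst_pow th m u2) /\ w = w1 ++ w2.
Proof.
  revert w; induction m as [|m IH]; intro w.
  - simpl. split.
    + intros [<-|[]]. exists u1, u2; auto.
    + intros [w1 [w2 [[<-|[]] [[<-|[]] ->]]]]; auto.
  - rewrite sp_S. split.
    + intros [v [Hv Hw]]. apply IH in Hv. destruct Hv as [v1 [v2 [H1 [H2 ->]]]].
      apply sw_app in Hw. destruct Hw as [w1 [w2 [G1 [G2 ->]]]].
      exists w1, w2. rewrite !sp_S. split; [|split]; eauto.
    + intros [w1 [w2 [H1 [H2 ->]]]]. rewrite sp_S in H1, H2.
      destruct H1 as [v1 [Hv1 G1]]. destruct H2 as [v2 [Hv2 G2]].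
      exists (v1 ++ v2). rewrite IH, sw_app. split; eauto 6.
Qed.

Lemma iter_ss m S w : In w (Nat.iter m (subst_set th) S) <->
  exists u, In u S /\ In w (subst_pow th m u).
Proof.
  revert w; induction m as [|m IH]; intro w; simpl.
  - split. intro H. exists w; auto. intros [u [H [<-|[]]]]; auto.
  - rewrite ss_In. split.
    + intros [v [Hv Hw]]. apply IH in Hv. destruct Hv as [u [Hu Hv]]. exists u.
      split; auto. apply sp_S. eauto.
    + intros [u [Hu Hw]]. apply sp_S in Hw. destruct Hw as [v [Hv Hw]].
      exists v. rewrite IH. eauto.
Qed.

Lemma sp_letter m i w : In w (subst_pow th (S m) [i]) <->
  exists u, In u (th i) /\ In w (subst_pow th m u).
Proof.
  unfold subst_pow. rewrite Nat.iter_succ_r, iter_ss. split.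
  - intros [u [Hu Hw]]. exists u. split; auto. rewrite ss_In in Hu.
    destruct Hu as [v [[<-|[]] Hv]]. apply sw_cons in Hv.
    destruct Hv as [x [y [Hx [Hy ->]]]]. apply sw_nil in Hy. subst. rewrite app_nil_r; auto.
  - intros [u [Hu Hw]]. exists u. split; auto. apply ss_In. exists [i]. split. left; auto.
    apply sw_cons. exists u, []. rewrite sw_nil, app_nil_r. auto.
Qed.

Lemma sp_one i w : In w (subst_pow th 1 [i]) <-> In w (th i).
Proof. rewrite sp_letter. split. intros [u [Hu [<-|[]]]]; auto. intro; exists w; simpl; auto. Qed.

Lemma sp_cons m a u w : In w (subst_pow th m (a :: u)) <->
  exists w1 w2, In w1 (subst_pow th m [a]) /\ In w2 (subst_pow th m u) /\ w = w1 ++ w2.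
Proof. apply (sp_app m [a] u). Qed.

Hypothesis Hval : valid_rsubst n th.

Lemma sw_over u w : over u -> In w (subst_word th u) -> over w.
Proof.
  revert w; induction u as [|a u IH]; intros w Hu Hw.
  - apply sw_nil in Hw. subst. intros b [].
  - apply over_cons in Hu. destruct Hu as [Ha Hu]. apply sw_cons in Hw.
    destruct Hw as [x [v [Hx [Hv ->]]]]. apply over_app. split; eauto.
    destruct (Hval a Ha) as [_ H]. exact (proj2 (H x Hx)).
Qed.

Lemma sp_over m u w : over u -> In w (subst_pow th m u) -> over w.
Proof.
  revert w; induction m as [|m IH]; intros w Hu Hw.
  - destruct Hw as [<-|[]]; auto.
  - apply sp_S in Hw. destruct Hw as [v [Hv Hw]]. exact (sw_over v w (IH v Hu Hv) Hw).
Qed.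

Lemma sw_ex u : over u -> exists w, In w (subst_word th u).
Proof.
  induction u as [|a u IH]; intro Hu.
  - exists []. left; auto.
  - apply over_cons in Hu. destruct Hu as [Ha Hu]. destruct (IH Hu) as [v Hv].
    destruct (Hval a Ha) as [Hne _]. exists (hd [] (th a) ++ v). apply sw_cons.
    exists (hd [] (th a)), v. split; auto. apply hd_In; auto.
Qed.

Lemma sp_nonempty m u : over u -> subst_pow th m u <> [].
Proof.
  intros Hu E. assert (exists w, In w (subst_pow th m u)) as [w Hw].
  { clear E. revert u Hu; induction m as [|m IH]; intros u Hu.
    - exists u. left; auto.
    - destruct (IH u Hu) as [v Hv]. destruct (sw_ex v) as [w Hw].
      + eapply sp_over; eauto.
      + exists w. apply sp_S. eauto. }
  rewrite E in Hw. inversion Hw.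
Qed.

Lemma card_pow_card m i : card_pow th m i = card (subst_pow th m [i]).
Proof. reflexivity. Qed.

Lemma card_pow_pos m i : (i < n)%nat -> (1 <= card_pow th m i)%nat.
Proof. intro Hi. apply card_pos, sp_nonempty, over_letter, Hi. Qed.

Lemma q_nonneg m i : (i < n)%nat -> 0 <= q th m i.
Proof.
  intro Hi. unfold q. rewrite <- ln_1. change 1 with (INR 1).
  apply ln_card_le; auto. apply card_pow_pos, Hi.
Qed.

Lemma q_0 i : q th 0 i = 0.
Proof. apply ln_1. Qed.

(* Tmul z = M^T z, i.e. (Tmul z)_i = sum_b M_(b i) z_b: the total weight of theta(a_i) *)
Definition Tmul (z : nat -> R) (i : nat) : R := rsum n (fun b => INR (subst_mat th b i) * z b).

Lemma Tmul_ext f g i : (forall b, (b < n)%nat -> f b = g b) -> Tmul f i = Tmul g i.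
Proof. intro H. apply rsum_ext. intros b Hb. rewrite H; auto. Qed.

Lemma Tmul_zero i : Tmul (fun _ => 0) i = 0.
Proof. unfold Tmul. rewrite (rsum_ext n _ (fun _ => 0)). apply rsum_zero. intros; ring. Qed.

Lemma Tmul_mono f g i : (forall b, (b < n)%nat -> f b <= g b) -> Tmul f i <= Tmul g i.
Proof. intro H. apply rsum_le. intros b Hb. apply Rmult_le_compat_l; auto. apply pos_INR. Qed.

Lemma Tmul_lin c d x y i : Tmul (fun b => c * x b + d * y b) i = c * Tmul x i + d * Tmul y i.
Proof. unfold Tmul. rewrite <- !rsum_scal, <- rsum_plus. apply rsum_ext. intros; ring. Qed.

Lemma Tmul_rsum m f i :
  Tmul (fun b => rsum m (fun j => f j b)) i = rsum m (fun j => Tmul (f j) i).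
Proof. unfold Tmul. rewrite rsum_swap. apply rsum_ext. intros b _. symmetry. apply rsum_scal. Qed.

(* every column of M is non-zero, since theta(a_i) consists of non-empty words *)
Lemma col_pos i : (i < n)%nat -> exists b, (b < n)%nat /\ (1 <= subst_mat th b i)%nat.
Proof.
  intro Hi. destruct (Hval i Hi) as [Hne Hw].
  destruct (Hw (hd [] (th i)) (hd_In _ _ Hne)) as [Hne2 Ob].
  unfold subst_mat. destruct (hd [] (th i)) as [|b u]. congruence.
  exists b. split. apply Ob; left; auto. unfold occ. simpl.
  destruct (Nat.eq_dec b b). lia. congruence.
Qed.

Lemma Tmul_pos z i : (i < n)%nat -> (forall b, (b < n)%nat -> 0 < z b) -> 0 < Tmul z i.
Proof.
  intros Hi Hz. destruct (col_pos i Hi) as [b [Hb H1]]. apply le_INR in H1.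
  eapply Rlt_le_trans. 2: apply (rsum_ge_term n _ b); auto.
  - simpl in H1. specialize (Hz b Hb). nra.
  - intros c Hc. specialize (Hz c Hc). pose proof (pos_INR (subst_mat th c i)). nra.
Qed.

Lemma Tmul_one_ge_1 i : (i < n)%nat -> 1 <= Tmul (fun _ => 1) i.
Proof.
  intro Hi. destruct (col_pos i Hi) as [b [Hb H1]]. apply le_INR in H1. simpl in H1.
  eapply Rle_trans. 2: apply (rsum_ge_term n _ b); auto. lra.
  intros c Hc. pose proof (pos_INR (subst_mat th c i)). lra.
Qed.

Hypothesis Hsc : semi_compatible n th.

Lemma lsum_th i u f : (i < n)%nat -> In u (th i) -> lsum f u = Tmul f i.
Proof.
  intros Hi Hu. destruct (Hval i Hi) as [Hne Hw]. destruct (Hw u Hu) as [_ Ou].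
  rewrite lsum_occ by auto. apply rsum_ext. intros b Hb. unfold subst_mat.
  rewrite (Hsc i Hi u (hd [] (th i))); auto. apply hd_In; auto.
Qed.

Lemma sw_occ u w : over u -> In w (subst_word th u) -> forall b, (b < n)%nat ->
  INR (occ w b) = lsum (fun x => INR (subst_mat th b x)) u.
Proof.
  revert w; induction u as [|a u IH]; intros w Hu Hw b Hb.
  - apply sw_nil in Hw. subst. reflexivity.
  - apply over_cons in Hu. destruct Hu as [Ha Hu]. apply sw_cons in Hw.
    destruct Hw as [x [v [Hx [Hv ->]]]]. simpl.
    unfold occ at 1. rewrite count_occ_app, plus_INR. fold (occ x b) (occ v b).
    rewrite (IH v) by auto. unfold subst_mat.
    rewrite (Hsc a Ha x (hd [] (th a))); auto. apply hd_In, Hval, Ha.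
Qed.

Lemma sp_occ_eq m u v w w' : over u -> over v -> (forall c, (c < n)%nat -> occ u c = occ v c) ->
  In w (subst_pow th m u) -> In w' (subst_pow th m v) ->
  forall b, (b < n)%nat -> occ w b = occ w' b.
Proof.
  revert w w'; induction m as [|m IH]; intros w w' Hu Hv Huv Hw Hw'.
  - destruct Hw as [<-|[]]. destruct Hw' as [<-|[]]. auto.
  - apply sp_S in Hw, Hw'. destruct Hw as [x [Hx Hw]]. destruct Hw' as [x' [Hx' Hw']].
    pose proof (sp_over m u x Hu Hx) as Ox. pose proof (sp_over m v x' Hv Hx') as Ox'.
    intros b Hb. apply INR_eq. rewrite (sw_occ x w), (sw_occ x' w'), !lsum_occ by auto.
    apply rsum_ext. intros c Hc. rewrite (IH x x'); auto.
Qed.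

Lemma len_sp_letter m a w : (a < n)%nat -> In w (subst_pow th m [a]) ->
  INR (length w) = ell th m a.
Proof.
  intros Ha Hw. unfold ell. pose proof (over_letter a Ha) as Oa.
  pose proof (hd_In [] _ (sp_nonempty m [a] Oa)) as H0.
  rewrite !len_occ by (eapply sp_over; eauto).
  apply rsum_ext. intros c Hc. f_equal. eapply sp_occ_eq; eauto.
Qed.

Lemma len_sp m u w : over u -> In w (subst_pow th m u) -> INR (length w) = lsum (ell th m) u.
Proof.
  revert w; induction u as [|a u IH]; intros w Hu Hw.
  - apply sp_nil in Hw. subst. reflexivity.
  - apply over_cons in Hu. destruct Hu as [Ha Hu]. apply sp_cons in Hw.
    destruct Hw as [w1 [w2 [H1 [H2 ->]]]]. rewrite length_app, plus_INR. simpl.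
    rewrite (len_sp_letter m a w1), (IH w2); auto.
Qed.

(* #theta^m(u1 ... uk) = prod_j #theta^m(u_j), the words of each factor having equal lengths *)
Lemma card_sp m u : over u -> ln (INR (card (subst_pow th m u))) = lsum (q th m) u.
Proof.
  induction u as [|a u IH]; intro Hu.
  - simpl. rewrite (card_ext _ [[]]). apply ln_1.
    intro x. rewrite sp_nil. simpl. split. auto. intros [E|[]]; auto.
  - apply over_cons in Hu. destruct Hu as [Ha Hu]. pose proof (over_letter a Ha) as Oa.
    rewrite (card_prod (subst_pow th m [a]) (subst_pow th m u) (length (hd [] (subst_pow th m [a])))).
    + rewrite ln_card_mult, IH by (auto; apply card_pos, sp_nonempty; auto). reflexivity.
    + intros w Hw. apply INR_eq. rewrite (len_sp_letter m a w) by auto. reflexivity.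
    + intro w. apply sp_cons.
Qed.

Lemma card_th m i u : (i < n)%nat -> In u (th i) ->
  ln (INR (card (subst_pow th m u))) = Tmul (q th m) i.
Proof.
  intros Hi Hu. destruct (Hval i Hi) as [_ Hth]. destruct (Hth u Hu) as [_ Ou].
  rewrite card_sp by auto. apply lsum_th; auto.
Qed.

Lemma card_th_eq m i u v : (i < n)%nat -> In u (th i) -> In v (th i) ->
  card (subst_pow th m u) = card (subst_pow th m v).
Proof.
  intros Hi Hu Hv. destruct (Hval i Hi) as [_ Hth].
  destruct (Hth u Hu) as [_ Ou]. destruct (Hth v Hv) as [_ Ov].
  apply INR_eq, ln_inv; try (apply lt_0_INR, card_pos, sp_nonempty; auto).
  rewrite !(card_th m i) by auto. reflexivity.
Qed.

(* two distinct words with the same abelianisation have length at least 2; this is what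
   forces lam > 1 for a genuinely random substitution *)
Lemma distinct_words_long i u v : (i < n)%nat -> In u (th i) -> In v (th i) -> u <> v ->
  (2 <= length u)%nat.
Proof.
  intros Hi Hu Hv Huv. destruct (Hval i Hi) as [_ Hth].
  destruct (Hth u Hu) as [Hun Ou]. destruct (Hth v Hv) as [Hvn Ov].
  assert (Hocc : forall b, (b < n)%nat -> occ u b = occ v b) by (intros; apply (Hsc i); auto).
  assert (Hlen : length u = length v).
  { apply INR_eq. rewrite !len_occ by auto. apply rsum_ext. intros; rewrite Hocc; auto. }
  destruct u as [|b [|b' u']]; [congruence| |simpl; lia].
  destruct v as [|c [|c' v']]; simpl in Hlen; try lia.
  specialize (Hocc b (Ou b (or_introl eq_refl))). unfold occ in Hocc. simpl in Hocc.
  destruct (Nat.eq_dec b b); [|congruence]. destruct (Nat.eq_dec c b); [subst; congruence|lia].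
Qed.

Lemma card_S_flat m i :
  card (subst_pow th (S m) [i]) = card (flat_map (subst_pow th m) (nodup wdec (th i))).
Proof.
  apply card_ext. intro w. rewrite sp_letter, in_flat_map.
  split; intros [u [Hu Hw]]; exists u; rewrite ?nodup_In in *; auto.
Qed.

Lemma card_one i : card_pow th 1 i = length (nodup wdec (th i)).
Proof. rewrite card_pow_card. apply card_ext, sp_one. Qed.

Lemma two_images i : (i < n)%nat -> q th 1 i <> 0 -> exists u v, In u (th i) /\ In v (th i) /\ u <> v.
Proof.
  intros Hi Hq. pose proof (NoDup_nodup wdec (th i)) as ND. pose proof (card_pow_pos 1 i Hi) as Hc.
  assert (Hin : forall w, In w (nodup wdec (th i)) -> In w (th i)) by (intro; apply nodup_In).
  unfold q in Hq. rewrite card_one in Hq, Hc.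
  destruct (nodup wdec (th i)) as [|u [|v l]]; simpl in Hc; try lia.
  { exfalso. apply Hq, ln_1. }
  exists u, v. split; [apply Hin; left; auto|]. split; [apply Hin; right; left; auto|].
  intros <-. inversion ND; subst. apply H1; left; auto.
Qed.

Lemma ell_S m i : (i < n)%nat -> ell th (S m) i = Tmul (ell th m) i.
Proof.
  intro Hi.
  pose proof (hd_In [] _ (sp_nonempty (S m) [i] (over_letter i Hi))) as H0.
  unfold ell at 1. set (w := hd [] (subst_pow th (S m) [i])) in *.
  apply sp_letter in H0. destruct H0 as [u [Hu Hw]].
  destruct (Hval i Hi) as [_ Hth]. destruct (Hth u Hu) as [_ Ou].
  rewrite (len_sp m u w) by auto. apply lsum_th; auto.
Qed.

Lemma ell_pos m i : (i < n)%nat -> 0 < ell th m i.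
Proof.
  revert i; induction m; intros i Hi. unfold ell; simpl; lra.
  rewrite ell_S by auto. apply Tmul_pos; auto.
Qed.

Lemma q_step_repr m i : (i < n)%nat -> exists u0, In u0 (th i) /\
  (1 <= card (subst_pow th m u0))%nat /\ ln (INR (card (subst_pow th m u0))) = Tmul (q th m) i.
Proof.
  intro Hi. destruct (Hval i Hi) as [Hne Hth]. pose proof (hd_In [] _ Hne) as Hu0.
  exists (hd [] (th i)). split; auto. split.
  - apply card_pos, sp_nonempty. exact (proj2 (Hth _ Hu0)).
  - apply card_th; auto.
Qed.

Lemma q_S_bounds m i : (i < n)%nat ->
  Tmul (q th m) i <= q th (S m) i <= q th 1 i + Tmul (q th m) i.
Proof.
  intro Hi. destruct (q_step_repr m i Hi) as [u0 [Hu0 [C0 <-]]]. unfold q. split.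
  - apply ln_card_le; auto. rewrite card_pow_card.
    apply card_incl. intros w Hw. apply sp_letter. eauto.
  - rewrite <- ln_card_mult by (auto; apply card_pow_pos, Hi). apply ln_card_le.
    + apply card_pow_pos, Hi.
    + rewrite card_pow_card, card_S_flat, card_one. apply card_flat_le.
      intros u Hu. rewrite nodup_In in Hu. apply (card_th_eq m i); auto.
Qed.

(* identical set condition: theta^(m+1)(a_i) = theta^m(u0), so q_(m+1) = M^T q_m for m >= 1 *)
Lemma q_S_identical m i : identical_set_cond n th -> (1 <= m)%nat -> (i < n)%nat ->
  q th (S m) i = Tmul (q th m) i.
Proof.
  intros ID Hm Hi. destruct (q_step_repr m i Hi) as [u0 [Hu0 [_ <-]]]. unfold q.
  f_equal. f_equal. apply card_ext. intro w. rewrite sp_letter. split.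
  - intros [u [Hu Hw]]. apply (ID i Hi m Hm u u0); auto.
  - intro Hw; eauto.
Qed.

(* disjoint set condition: the union is disjoint, so q_(m+1) = q_1 + M^T q_m *)
Lemma q_S_disjoint m i : disjoint_set_cond n th -> (i < n)%nat ->
  q th (S m) i = q th 1 i + Tmul (q th m) i.
Proof.
  intros DJ Hi. destruct (q_step_repr m i Hi) as [u0 [Hu0 [C0 <-]]]. unfold q.
  rewrite <- ln_card_mult by (auto; apply card_pow_pos, Hi). f_equal. f_equal.
  rewrite card_pow_card, card_S_flat, card_one. apply card_flat_eq.
  - apply NoDup_nodup.
  - intros u Hu. rewrite nodup_In in Hu. apply (card_th_eq m i); auto.
  - intros u v w Hu Hv Huv Hw Hw'. rewrite nodup_In in Hu, Hv. destruct m as [|m].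
    + destruct Hw as [<-|[]]; destruct Hw' as [<-|[]]; auto.
    + apply (DJ i Hi (S m) ltac:(lia) u v Hu Hv Huv w). auto.
Qed.

End Substitution.

(** * Perron-Frobenius asymptotics of the iterates of M^T *)

Section PerronFrobenius.

Variable n : nat.
Variable th : rsubst.
Hypothesis Hval : valid_rsubst n th.

Definition Tpow (j : nat) (z : nat -> R) : nat -> R := Nat.iter j (Tmul n th) z.

Lemma Tpow_S j z : Tpow (S j) z = Tmul n th (Tpow j z).
Proof. reflexivity. Qed.

Lemma Tpow_add j1 j2 z : Tpow (j1 + j2) z = Tpow j1 (Tpow j2 z).
Proof. apply Nat.iter_add. Qed.

Lemma Tpow_mono j f g i : (i < n)%nat -> (forall b, (b < n)%nat -> f b <= g b) ->
  Tpow j f i <= Tpow j g i.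
Proof.
  revert i. induction j; intros i Hi H. simpl; auto.
  rewrite !Tpow_S. apply Tmul_mono. intros b Hb. apply IHj; auto.
Qed.

Lemma Tpow_lin j c d x y i :
  Tpow j (fun b => c * x b + d * y b) i = c * Tpow j x i + d * Tpow j y i.
Proof.
  revert i. induction j; intro i. reflexivity. rewrite !Tpow_S, <- Tmul_lin.
  apply Tmul_ext. intros; auto.
Qed.

Lemma Tpow_pos j z i : (i < n)%nat -> (forall b, (b < n)%nat -> 0 < z b) -> 0 < Tpow j z i.
Proof.
  revert i. induction j; intros i Hi H. simpl; auto.
  rewrite Tpow_S. apply Tmul_pos; auto.
Qed.

Lemma Tpow_formula k z i : (i < n)%nat ->
  Tpow k z i = rsum n (fun j => INR (mat_pow n (subst_mat th) k j i) * z j).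
Proof.
  revert z i; induction k; intros z i Hi.
  - simpl. rewrite <- (rsum_delta n z i Hi) at 1. apply rsum_ext. intros j Hj.
    destruct (Nat.eqb_spec j i), (Nat.eq_dec i j); subst; simpl; try lra; congruence.
  - unfold Tpow. rewrite Nat.iter_succ_r. fold (Tpow k (Tmul n th z)). rewrite IHk by auto.
    unfold Tmul. simpl. symmetry.
    rewrite (rsum_ext n _ (fun j => rsum n (fun l =>
       INR (mat_pow n (subst_mat th) k l i) * (INR (subst_mat th j l) * z j)))).
    + rewrite rsum_swap. apply rsum_ext. intros l Hl. rewrite <- rsum_scal. reflexivity.
    + intros j Hj. rewrite INR_nsum, Rmult_comm, <- rsum_scal. apply rsum_ext. intros l Hl.
      rewrite mult_INR. ring.
Qed.

Definition band (al be : R) (x y : nat -> R) : Prop :=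
  forall i, (i < n)%nat -> al * y i <= x i <= be * y i.

Lemma band_initial x y : (forall i, (i < n)%nat -> 0 < y i) -> exists B, band (- B) B x y.
Proof.
  intro Hy. exists (rsum n (fun j => Rabs (x j / y j))). intros j Hj.
  assert (Rabs (x j / y j) <= rsum n (fun j => Rabs (x j / y j)))
    by (apply (rsum_ge_term n (fun j => Rabs (x j / y j))); auto; intros; apply Rabs_pos).
  specialize (Hy j Hj). assert (E : x j = (x j / y j) * y j) by (field; lra).
  pose proof (Rle_abs (x j / y j)). pose proof (Rle_abs (- (x j / y j))). rewrite Rabs_Ropp in *.
  split; rewrite E; nra.
Qed.

Lemma band_Tpow j al be x y : band al be x y -> band al be (Tpow j x) (Tpow j y).
Proof.
  intros H i Hi. split.
  - assert (H0 : Tpow j (fun b => 0 * x b + 0 * y b) i <= Tpow j (fun b => 1 * x b + (- al) * y b) i)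
      by (apply Tpow_mono; auto; intros b Hb; specialize (H b Hb); lra).
    rewrite !Tpow_lin in H0. lra.
  - assert (H0 : Tpow j (fun b => 0 * x b + 0 * y b) i <= Tpow j (fun b => (-1) * x b + be * y b) i)
      by (apply Tpow_mono; auto; intros b Hb; specialize (H b Hb); lra).
    rewrite !Tpow_lin in H0. lra.
Qed.

Lemma band_ratio al be x y i : band al be x y -> (i < n)%nat -> 0 < y i -> al <= x i / y i <= be.
Proof.
  intros H Hi Hy. destruct (H i Hi) as [H1 H2]. split.
  - apply Rmult_le_reg_r with (y i); auto. unfold Rdiv. rewrite Rmult_assoc, Rinv_l; lra.
  - apply Rmult_le_reg_r with (y i); auto. unfold Rdiv. rewrite Rmult_assoc, Rinv_l; lra.
Qed.

Variable k : nat.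
Hypothesis Hk : forall i j, (i < n)%nat -> (j < n)%nat -> (0 < mat_pow n (subst_mat th) k i j)%nat.

Definition Kbound : R := rsum n (fun i => rsum n (fun j => INR (mat_pow n (subst_mat th) k j i))).

Lemma entry_bounds i j : (i < n)%nat -> (j < n)%nat ->
  1 <= INR (mat_pow n (subst_mat th) k j i) <= Kbound.
Proof.
  intros Hi Hj. split.
  - specialize (Hk j i Hj Hi). apply le_INR in Hk. simpl in Hk. lra.
  - eapply Rle_trans.
    2: apply (rsum_ge_term n _ i); auto; intros; apply rsum_nonneg; intros; apply pos_INR.
    apply (rsum_ge_term n (fun j => INR (mat_pow n (subst_mat th) k j i)) j); auto.
    intros; apply pos_INR.
Qed.

Lemma Kbound_ge_1 : (0 < n)%nat -> 1 <= Kbound.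
Proof. intro Hn. pose proof (entry_bounds 0 0 Hn Hn). lra. Qed.

Lemma Tpow_k_bounds z i : (i < n)%nat -> (forall j, (j < n)%nat -> 0 <= z j) ->
  rsum n z <= Tpow k z i <= Kbound * rsum n z.
Proof.
  intros Hi Hz. rewrite Tpow_formula, <- rsum_scal by auto. split; apply rsum_le;
  intros j Hj; pose proof (entry_bounds i j Hi Hj); specialize (Hz j Hj); nra.
Qed.

Lemma band_contract x y al be : (0 < n)%nat -> (forall i, (i < n)%nat -> 0 < y i) ->
  band al be x y -> exists al' be', be' - al' = (1 - / Kbound) * (be - al) /\
    band al' be' (Tpow k x) (Tpow k y).
Proof.
  intros Hn Hy Hxy. pose proof (Kbound_ge_1 Hn) as HK. set (K := Kbound) in *.
  set (s := rsum n y). assert (Hs : 0 < s) by (apply rsum_pos; auto).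
  set (zl := fun j => 1 * x j + (- al) * y j). set (zu := fun j => (-1) * x j + be * y j).
  assert (Hzl : forall j, (j < n)%nat -> 0 <= zl j)
    by (intros j Hj; specialize (Hxy j Hj); unfold zl; lra).
  assert (Hzu : forall j, (j < n)%nat -> 0 <= zu j)
    by (intros j Hj; specialize (Hxy j Hj); unfold zu; lra).
  set (su := rsum n zl). set (sv := rsum n zu).
  assert (Hsu : 0 <= su) by (apply rsum_nonneg; auto).
  assert (Hsv : 0 <= sv) by (apply rsum_nonneg; auto).
  assert (Hsum : su + sv = (be - al) * s).
  { unfold su, sv, s, zl, zu. rewrite <- rsum_plus, <- rsum_scal. apply rsum_ext. intros; ring. }
  exists (al + su / (K * s)), (be - sv / (K * s)). split.
  { replace (be - sv / (K * s) - (al + su / (K * s))) with (be - al - (su + sv) / (K * s))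
      by (field; lra). rewrite Hsum. field. lra. }
  intros i Hi.
  destruct (Tpow_k_bounds zl i Hi Hzl) as [A1 _]. destruct (Tpow_k_bounds zu i Hi Hzu) as [A2 _].
  destruct (Tpow_k_bounds y i Hi ltac:(intros j Hj; left; auto)) as [_ A3].
  fold su in A1. fold sv in A2. fold s K in A3. unfold zl, zu in A1, A2.
  rewrite Tpow_lin in A1, A2.
  pose proof (Tpow_pos k y i Hi Hy).
  assert (T : forall t, 0 <= t -> t / (K * s) * Tpow k y i <= t).
  { intros t Ht. replace t with (t / (K * s) * (K * s)) at 2 by (field; lra).
    apply Rmult_le_compat_l; auto. unfold Rdiv. apply Rmult_le_pos; auto.
    left. apply Rinv_0_lt_compat. nra. }
  pose proof (T su Hsu). pose proof (T sv Hsv). split; nra.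
Qed.

Lemma band_iterate x y al be : (0 < n)%nat -> (forall i, (i < n)%nat -> 0 < y i) ->
  band al be x y -> forall t, exists al' be',
    be' - al' = (1 - / Kbound) ^ t * (be - al) /\ band al' be' (Tpow (t * k) x) (Tpow (t * k) y).
Proof.
  intros Hn Hy Hb t. induction t as [|t [al' [be' [E Hb']]]].
  - exists al, be. split. simpl; ring. exact Hb.
  - destruct (band_contract (Tpow (t * k) x) (Tpow (t * k) y) al' be' Hn) as [al'' [be'' [E' Hb'']]].
    + intros; apply Tpow_pos; auto.
    + exact Hb'.
    + exists al'', be''. split. rewrite E', E. simpl. ring.
      replace (S t * k)%nat with (k + t * k)%nat by lia. rewrite !Tpow_add. exact Hb''.
Qed.

Variable lam : R.
Variable Rv : nat -> R.
Hypothesis HPF : PF_right n (subst_mat th) lam Rv.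

Definition Rdot (z : nat -> R) : R := rsum n (fun i => z i * Rv i).

Lemma Rdot_ext f g : (forall i, (i < n)%nat -> f i = g i) -> Rdot f = Rdot g.
Proof. intro H. apply rsum_ext. intros i Hi. rewrite H; auto. Qed.

Lemma Rdot_lin c d x y : Rdot (fun b => c * x b + d * y b) = c * Rdot x + d * Rdot y.
Proof. unfold Rdot. rewrite <- !rsum_scal, <- rsum_plus. apply rsum_ext. intros; ring. Qed.

Lemma Rdot_le f g : (forall i, (i < n)%nat -> f i <= g i) -> Rdot f <= Rdot g.
Proof.
  destruct HPF as [HR _]. intro H. apply rsum_le. intros i Hi.
  apply Rmult_le_compat_r; auto. left; auto.
Qed.

(* ||R||_1 = 1 *)
Lemma Rdot_const c : Rdot (fun _ => c) = c.
Proof. destruct HPF as [_ [HS _]]. unfold Rdot. rewrite rsum_scal, HS. ring. Qed.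

(* the normalisation ||R||_1 = 1 forces a non-empty alphabet *)
Lemma dim_pos : (0 < n)%nat.
Proof. destruct HPF as [_ [HS _]]. destruct n. simpl in HS. lra. lia. Qed.

Lemma Rdot_pos z : (forall i, (i < n)%nat -> 0 < z i) -> 0 < Rdot z.
Proof.
  destruct HPF as [HR _]. intro H. apply rsum_pos. apply dim_pos.
  intros i Hi. apply Rmult_lt_0_compat; auto.
Qed.

(* R is a right eigenvector: (M^T z)^T R = z^T M R = lam z^T R *)
Lemma Rdot_Tmul z : Rdot (Tmul n th z) = lam * Rdot z.
Proof.
  destruct HPF as [_ [_ PF]]. unfold Rdot, Tmul.
  rewrite (rsum_ext n _ (fun i => rsum n (fun b => z b * (INR (subst_mat th b i) * Rv i)))).
  - rewrite rsum_swap, <- rsum_scal. apply rsum_ext. intros b Hb.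
    rewrite rsum_scal, PF by auto. ring.
  - intros i Hi. rewrite Rmult_comm, <- rsum_scal. apply rsum_ext. intros; ring.
Qed.

Lemma Rdot_Tpow j z : Rdot (Tpow j z) = lam ^ j * Rdot z.
Proof. induction j. simpl; ring. rewrite Tpow_S, Rdot_Tmul, IHj. simpl; ring. Qed.

(* all column sums of M are >= 1, hence lam >= 1 *)
Lemma lam_ge_1 : 1 <= lam.
Proof.
  assert (L : Rdot (fun _ => 1) <= Rdot (Tmul n th (fun _ => 1)))
    by (apply Rdot_le; intros i Hi; apply Tmul_one_ge_1; auto).
  rewrite Rdot_Tmul, !Rdot_const in L. lra.
Qed.

Lemma lam_gt_1 i0 : (i0 < n)%nat -> 2 <= Tmul n th (fun _ => 1) i0 -> 1 < lam.
Proof.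
  intros Hi0 H2. destruct HPF as [HR _].
  assert (L : Rdot (fun i => 1 * 1 + 1 * (if Nat.eq_dec i0 i then 1 else 0))
              <= Rdot (Tmul n th (fun _ => 1))).
  { apply Rdot_le. intros i Hi. pose proof (Tmul_one_ge_1 n th Hval i Hi).
    destruct (Nat.eq_dec i0 i) as [<-|]; lra. }
  rewrite Rdot_lin, Rdot_const, Rdot_Tmul, Rdot_const in L. unfold Rdot in L.
  rewrite rsum_delta in L by auto. specialize (HR i0 Hi0). lra.
Qed.

Lemma Rdot_ratio_Tpow j x y : (forall i, (i < n)%nat -> 0 < y i) ->
  Rdot (Tpow j x) / Rdot (Tpow j y) = Rdot x / Rdot y.
Proof.
  intro Hy. pose proof (Rdot_pos y Hy). pose proof lam_ge_1.
  assert (0 < lam ^ j) by (apply pow_lt; lra).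
  rewrite !Rdot_Tpow. field. split; lra.
Qed.

Lemma band_Rdot al be x y : (forall i, (i < n)%nat -> 0 < y i) -> band al be x y ->
  al <= Rdot x / Rdot y <= be.
Proof.
  intros Hy Hb. pose proof (Rdot_pos y Hy) as Hpos.
  assert (L1 : Rdot (fun i => al * y i + 0 * x i) <= Rdot x)
    by (apply Rdot_le; intros; apply Hb in H; lra).
  assert (L2 : Rdot x <= Rdot (fun i => be * y i + 0 * x i))
    by (apply Rdot_le; intros; apply Hb in H; lra).
  rewrite Rdot_lin in L1, L2.
  split; apply Rmult_le_reg_r with (Rdot y); auto; unfold Rdiv; rewrite Rmult_assoc, Rinv_l; lra.
Qed.

Lemma ratio_conv x y : (forall i, (i < n)%nat -> 0 < y i) ->
  forall i, (i < n)%nat -> forall eps, 0 < eps -> exists N, forall j, (N <= j)%nat ->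
  Rabs (Tpow j x i / Tpow j y i - Rdot x / Rdot y) < eps.
Proof.
  intros Hy i Hi eps Heps. pose proof dim_pos as Hn. pose proof (Kbound_ge_1 Hn) as HK.
  set (rho := 1 - / Kbound).
  assert (Hrho : 0 <= rho < 1).
  { assert (/ Kbound <= 1) by (rewrite <- Rinv_1; apply Rinv_le_contravar; lra).
    assert (0 < / Kbound) by (apply Rinv_0_lt_compat; lra). unfold rho; lra. }
  destruct (band_initial x y Hy) as [B HB].
  assert (HB0 : 0 <= B) by (destruct (HB 0%nat Hn); pose proof (Hy 0%nat Hn); nra).
  destruct (pow_lt_1_zero rho ltac:(rewrite Rabs_pos_eq; lra) (eps / (2 * B + 1))) as [T HT].
  { apply Rdiv_lt_0_compat; lra. }
  specialize (HT T (le_n T)). rewrite Rabs_pos_eq in HT by (apply pow_le; lra).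
  destruct (band_iterate x y (- B) B Hn Hy HB T) as [al [be [E Hb]]].
  exists (T * k)%nat. intros j Hj.
  assert (Hbj : band al be (Tpow j x) (Tpow j y)).
  { replace j with ((j - T * k) + T * k)%nat by lia. rewrite !Tpow_add. apply band_Tpow, Hb. }
  assert (Hyj : forall b, (b < n)%nat -> 0 < Tpow j y b) by (intros; apply Tpow_pos; auto).
  pose proof (band_ratio _ _ _ _ i Hbj Hi (Hyj i Hi)) as Hr.
  pose proof (band_Rdot _ _ _ _ Hyj Hbj) as Hc. rewrite Rdot_ratio_Tpow in Hc by auto.
  assert (be - al < eps).
  { rewrite E. replace (B - - B) with (2 * B) by ring.
    apply Rmult_lt_compat_r with (r := 2 * B + 1) in HT; [|lra].
    replace (eps / (2 * B + 1) * (2 * B + 1)) with eps in HT by (field; lra).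
    assert (0 <= rho ^ T) by (apply pow_le; lra). fold rho. nra. }
  apply Rabs_def1; lra.
Qed.

Lemma ratio_conv_bounds x y : (forall i, (i < n)%nat -> 0 < y i) ->
  forall i, (i < n)%nat -> forall del, 0 < del -> exists N, forall j, (N <= j)%nat ->
  (Rdot x / Rdot y - del) * Tpow j y i <= Tpow j x i <= (Rdot x / Rdot y + del) * Tpow j y i.
Proof.
  intros Hy i Hi del Hdel. destruct (ratio_conv x y Hy i Hi del Hdel) as [N HN].
  exists N. intros j Hj. specialize (HN j Hj). apply Rabs_def2 in HN.
  assert (Hp : 0 < Tpow j y i) by (apply Tpow_pos; auto).
  replace (Tpow j x i) with (Tpow j x i / Tpow j y i * Tpow j y i) by (field; lra).
  split; apply Rmult_le_compat_r; lra.
Qed.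

End PerronFrobenius.

(** * Inflation word entropy *)

Section Entropy.

Variable n : nat.
Variable th : rsubst.
Variable lam : R.
Variable Rv : nat -> R.
Hypothesis Hval : valid_rsubst n th.
Hypothesis Hsc : semi_compatible n th.
Hypothesis HPF : PF_right n (subst_mat th) lam Rv.

Lemma lam_pos : 0 < lam.
Proof. pose proof (lam_ge_1 n th Hval lam Rv HPF). lra. Qed.

Lemma ell_shift r j i : (i < n)%nat -> ell th (j + r) i = Tpow n th j (ell th r) i.
Proof.
  revert i. induction j; intros i Hi. reflexivity.
  simpl plus. rewrite (ell_S n th Hval Hsc) by auto. apply Tmul_ext. auto.
Qed.

Lemma Rdot_ell r : Rdot n Rv (ell th r) = lam ^ r.
Proof.
  assert (E : Rdot n Rv (ell th r) = Rdot n Rv (Tpow n th r (fun _ => 1))).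
  { apply Rdot_ext. intros i Hi. rewrite <- (Nat.add_0_r r) at 1. apply ell_shift; auto. }
  rewrite E, (Rdot_Tpow n th lam Rv HPF), (Rdot_const n th lam Rv HPF). ring.
Qed.

Lemma ratio_nonneg m i : (i < n)%nat -> 0 <= q th m i / ell th m i.
Proof.
  intro Hi. unfold Rdiv. apply Rmult_le_pos. apply (q_nonneg n th Hval); auto.
  left. apply Rinv_0_lt_compat, (ell_pos n th Hval Hsc); auto.
Qed.

Lemma q_shift_ge r j i : (i < n)%nat -> Tpow n th j (q th r) i <= q th (j + r) i.
Proof.
  revert i. induction j; intros i Hi. simpl. lra.
  simpl plus. rewrite Tpow_S. eapply Rle_trans.
  - apply Tmul_mono. intros b Hb. apply IHj; auto.
  - apply (q_S_bounds n th Hval Hsc); auto.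
Qed.

Lemma q_le_partial_sum m i : (i < n)%nat ->
  q th m i <= rsum m (fun j => Tpow n th j (q th 1) i).
Proof.
  revert i. induction m; intros i Hi. simpl. rewrite q_0. lra.
  rewrite rsum_first. eapply Rle_trans. apply (q_S_bounds n th Hval Hsc); auto.
  apply Rplus_le_compat_l. change (Tmul n th (q th m) i <=
    rsum m (fun j => Tmul n th (Tpow n th j (q th 1)) i)).
  rewrite <- Tmul_rsum. apply Tmul_mono. auto.
Qed.

Lemma q_vanish : (forall i, (i < n)%nat -> q th 1 i = 0) -> forall m i, (i < n)%nat -> q th m i = 0.
Proof.
  intros H0 m. induction m; intros i Hi. apply q_0.
  pose proof (q_S_bounds n th Hval Hsc m i Hi) as [B1 B2].
  rewrite (Tmul_ext n th _ (fun _ => 0)), Tmul_zero in B1, B2 by auto.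
  rewrite H0 in B2 by auto. lra.
Qed.

(* Either the substitution is deterministic on letters or lam > 1: a letter with two
   distinct images has an image of length >= 2, i.e. a column sum >= 2. *)
Lemma degenerate_or_expanding : (forall i, (i < n)%nat -> q th 1 i = 0) \/ 1 < lam.
Proof.
  destruct (classic (forall i, (i < n)%nat -> q th 1 i = 0)) as [H|H]; [left; auto|right].
  apply not_all_ex_not in H. destruct H as [i0 H]. apply imply_to_and in H. destruct H as [Hi0 Hq].
  destruct (two_images n th Hval i0 Hi0 Hq) as [u [v [Hu [Hv Huv]]]].
  apply (lam_gt_1 n th Hval lam Rv HPF i0 Hi0).
  rewrite <- (lsum_th n th Hval Hsc i0 u), lsum_len by auto.
  pose proof (distinct_words_long n th Hval Hsc i0 u v Hi0 Hu Hv Huv) as H2.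
  apply le_INR in H2. simpl in H2. lra.
Qed.

Lemma qR_vanish : (forall i, (i < n)%nat -> q th 1 i = 0) -> forall r, qR n th Rv r = 0.
Proof.
  intros H0 r. unfold qR. rewrite (rsum_ext _ _ (fun _ => 0)). apply rsum_zero.
  intros j Hj. rewrite (q_vanish H0 r j Hj). ring.
Qed.

Lemma qR_nonneg r : 0 <= qR n th Rv r.
Proof.
  destruct HPF as [HR _]. apply rsum_nonneg. intros i Hi.
  apply Rmult_le_pos. apply (q_nonneg n th Hval); auto. left; auto.
Qed.

Section Primitive.

Variable k : nat.
Hypothesis Hk : forall i j, (i < n)%nat -> (j < n)%nat -> (0 < mat_pow n (subst_mat th) k i j)%nat.

(* the lower bound for every r: eventually q_m / ell_m >= q_r^T R / lam^r - eps, because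
   q_m >= (M^T)^(m-r) q_r and (M^T)^j q_r / (M^T)^j ell_r -> q_r^T R / ell_r^T R *)
Lemma lower_bound r i : (i < n)%nat -> forall eps, 0 < eps -> exists N, forall m, (N <= m)%nat ->
  / lam ^ r * qR n th Rv r - eps <= q th m i / ell th m i.
Proof.
  intros Hi eps Heps.
  destruct (ratio_conv n th Hval k Hk lam Rv HPF (q th r) (ell th r)) with (i := i) (eps := eps)
    as [N0 HN0]; auto.
  { intros; apply (ell_pos n th Hval Hsc); auto. }
  exists (N0 + r)%nat. intros m Hm. specialize (HN0 (m - r)%nat ltac:(lia)).
  apply Rabs_def2 in HN0. rewrite Rdot_ell in HN0.
  replace m with ((m - r) + r)%nat by lia. rewrite (ell_shift r (m - r) i) by auto.
  assert (0 < Tpow n th (m - r) (ell th r) i)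
    by (apply (Tpow_pos n th Hval); auto; intros; apply (ell_pos n th Hval Hsc); auto).
  assert (Tpow n th (m - r) (q th r) i / Tpow n th (m - r) (ell th r) i
          <= q th (m - r + r) i / Tpow n th (m - r) (ell th r) i).
  { unfold Rdiv. apply Rmult_le_compat_r. left; apply Rinv_0_lt_compat; auto.
    apply q_shift_ge; auto. }
  unfold qR. fold (Rdot n Rv (q th r)). unfold Rdiv in *. rewrite Rmult_comm. lra.
Qed.

(* ((M^T)^j q_1)_i ~ (q_1^T R) ell_j(i), since ell_j = (M^T)^j 1 and 1^T R = 1 *)
Lemma q1_iterate_asymptotic i : (i < n)%nat ->
  forall del, 0 < del -> exists J, forall j, (J <= j)%nat ->
  Tpow n th j (q th 1) i <= (qR n th Rv 1 + del) * ell th j i.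
Proof.
  intros Hi del Hdel.
  destruct (ratio_conv_bounds n th Hval k Hk lam Rv HPF (q th 1) (ell th 0))
    with (i := i) (del := del) as [J HJ]; auto.
  { intros; apply (ell_pos n th Hval Hsc); auto. }
  exists J. intros j Hj. destruct (HJ j Hj) as [_ H].
  rewrite Rdot_ell, <- ell_shift, Nat.add_0_r in H by auto.
  replace (qR n th Rv 1) with (Rdot n Rv (q th 1) / lam ^ 0) by (simpl; unfold qR, Rdot; field).
  exact H.
Qed.

(* ell_(j+1)(i) ~ lam ell_j(i), since ell_(j+1) = (M^T)^j ell_1 and ell_1^T R = lam *)
Lemma ell_growth i : (i < n)%nat ->
  forall del, 0 < del -> exists J, forall j, (J <= j)%nat ->
  (lam - del) * ell th j i <= ell th (S j) i.
Proof.
  intros Hi del Hdel.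
  destruct (ratio_conv_bounds n th Hval k Hk lam Rv HPF (ell th 1) (ell th 0))
    with (i := i) (del := del) as [J HJ]; auto.
  { intros; apply (ell_pos n th Hval Hsc); auto. }
  exists J. intros j Hj. destruct (HJ j Hj) as [H _].
  rewrite !Rdot_ell, <- !ell_shift, Nat.add_0_r, Nat.add_1_r in H by auto.
  replace lam with (lam ^ 1 / lam ^ 0) at 1 by (simpl; field). exact H.
Qed.

(* The upper bound: q_m <= sum_(j<m) (M^T)^j q_1, whose terms grow like (q_1^T R) ell_j, and
   ell_j grows like lam^j; so eventually q_m / ell_m <= q_1^T R / (lam - 1) + eps. *)
Lemma upper_bound i : (i < n)%nat -> forall eps, 0 < eps -> exists N, forall m, (N <= m)%nat ->
  q th m i / ell th m i <= / (lam - 1) * qR n th Rv 1 + eps.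
Proof.
  intros Hi eps Heps. destruct degenerate_or_expanding as [H0|Hlam].
  - exists 0%nat. intros m _. rewrite (q_vanish H0 m i Hi), (qR_vanish H0). unfold Rdiv. lra.
  - assert (He : forall j, 0 < ell th j i) by (intro; apply (ell_pos n th Hval Hsc); auto).
    destruct (partial_sum_ratio_limsup (fun j => Tpow n th j (q th 1) i) (fun j => ell th j i)
      (qR n th Rv 1) lam Hlam (qR_nonneg 1) He (q1_iterate_asymptotic i Hi) (ell_growth i Hi)
      eps Heps) as [N HN].
    exists N. intros m Hm. rewrite Rmult_comm. eapply Rle_trans; [|apply (HN m Hm)].
    unfold Rdiv. apply Rmult_le_compat_r. left; apply Rinv_0_lt_compat, He.
    apply q_le_partial_sum; auto.
Qed.

(* Under the identical set condition q_(j+1) = (M^T)^j q_1 exactly, so q_m / ell_m converges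
   to q_1^T R / ell_1^T R = q_1^T R / lam. *)
Lemma identical_limit i : identical_set_cond n th -> (i < n)%nat ->
  forall eps, 0 < eps -> exists N, forall m, (N <= m)%nat ->
  Rabs (q th m i / ell th m i - / lam * qR n th Rv 1) < eps.
Proof.
  intros ID Hi eps Heps. pose proof lam_pos.
  assert (Hq : forall j b, (b < n)%nat -> q th (j + 1) b = Tpow n th j (q th 1) b).
  { induction j; intros b Hb. reflexivity.
    simpl plus. rewrite (q_S_identical n th Hval Hsc) by (auto; lia). apply Tmul_ext. auto. }
  destruct (ratio_conv n th Hval k Hk lam Rv HPF (q th 1) (ell th 1)) with (i := i) (eps := eps)
    as [N0 HN0]; auto.
  { intros; apply (ell_pos n th Hval Hsc); auto. }
  exists (N0 + 1)%nat. intros m Hm. specialize (HN0 (m - 1)%nat ltac:(lia)).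
  rewrite Rdot_ell in HN0. replace m with ((m - 1) + 1)%nat by lia.
  rewrite Hq, ell_shift by auto.
  replace (/ lam * qR n th Rv 1) with (Rdot n Rv (q th 1) / lam ^ 1)
    by (simpl; unfold qR, Rdot; field; lra).
  exact HN0.
Qed.

End Primitive.

(* Under the disjoint set condition q_(r+1) = q_1 + M^T q_r, hence
   q_(r+1)^T R = q_1^T R + lam q_r^T R and q_r^T R (lam - 1) = q_1^T R (lam^r - 1). *)
Lemma qR_disjoint_step r : disjoint_set_cond n th ->
  qR n th Rv (S r) = qR n th Rv 1 + lam * qR n th Rv r.
Proof.
  intro DJ. unfold qR. fold (Rdot n Rv (q th (S r))) (Rdot n Rv (q th 1)) (Rdot n Rv (q th r)).
  rewrite (Rdot_ext n Rv _ (fun i => 1 * q th 1 i + 1 * Tmul n th (q th r) i)).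
  - rewrite Rdot_lin, (Rdot_Tmul n th lam Rv HPF). ring.
  - intros i Hi. rewrite (q_S_disjoint n th Hval Hsc) by auto. ring.
Qed.

Lemma qR_disjoint_closed r : disjoint_set_cond n th ->
  qR n th Rv r * (lam - 1) = qR n th Rv 1 * (lam ^ r - 1).
Proof.
  intro DJ. induction r.
  - unfold qR. rewrite (rsum_ext _ _ (fun _ => 0)), rsum_zero. simpl; ring.
    intros; rewrite q_0; ring.
  - rewrite qR_disjoint_step by auto. rewrite Rmult_plus_distr_r, Rmult_assoc, IHr. simpl. ring.
Qed.

(* ... so q_r^T R / lam^r = q_1^T R / (lam - 1) (1 - lam^-r) approaches q_1^T R / (lam - 1). *)
Lemma disjoint_lower_approx : disjoint_set_cond n th -> forall eps, 0 < eps ->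
  exists r, / (lam - 1) * qR n th Rv 1 - eps <= / lam ^ r * qR n th Rv r.
Proof.
  intros DJ eps Heps. pose proof (qR_nonneg 1) as Hc.
  destruct degenerate_or_expanding as [H0|Hlam].
  - exists 1%nat. rewrite !(qR_vanish H0). lra.
  - set (c := qR n th Rv 1) in *.
    destruct (INR_archimed (eps * ((lam - 1) * (lam - 1))) c) as [r Hr].
    { apply Rmult_lt_0_compat; nra. }
    exists r. set (L := lam ^ r).
    assert (HL : 1 + INR r * (lam - 1) <= L)
      by (unfold L; replace lam with (1 + (lam - 1)) at 2 by ring; apply bernoulli; lra).
    assert (Z : qR n th Rv r = c * (L - 1) / (lam - 1)).
    { apply Rmult_eq_reg_r with (lam - 1); [|lra].
      rewrite qR_disjoint_closed by auto. fold c L. field. lra. }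
    assert (Hr0 : 0 <= INR r * (lam - 1)) by (apply Rmult_le_pos; [apply pos_INR|lra]).
    assert (HP : 0 < (lam - 1) * L) by (apply Rmult_lt_0_compat; lra).
    assert (Hbig : eps * (lam - 1) * (INR r * (lam - 1)) <= eps * (lam - 1) * L)
      by (apply Rmult_le_compat_l; [apply Rmult_le_pos|]; lra).
    rewrite Z.
    replace (/ L * (c * (L - 1) / (lam - 1))) with (/ (lam - 1) * c - c / ((lam - 1) * L))
      by (field; lra).
    assert (c / ((lam - 1) * L) <= eps); [|lra].
    apply Rmult_le_reg_r with ((lam - 1) * L); auto.
    unfold Rdiv. rewrite Rmult_assoc, Rinv_l by lra. lra.
Qed.

(* r |-> q_r^T R / lam^r is non-decreasing, since q_(r+1) >= M^T q_r *)
Lemma qR_monotone r : / lam ^ r * qR n th Rv r <= / lam ^ S r * qR n th Rv (S r).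
Proof.
  pose proof lam_pos as Hlam. assert (Hp : 0 < lam ^ r) by (apply pow_lt; lra).
  assert (H1 : Rdot n Rv (Tmul n th (q th r)) <= Rdot n Rv (q th (S r))).
  { apply (Rdot_le n th lam Rv HPF). intros i Hi. apply (q_S_bounds n th Hval Hsc); auto. }
  rewrite (Rdot_Tmul n th lam Rv HPF) in H1.
  replace (/ lam ^ r * qR n th Rv r) with (/ lam ^ S r * (lam * Rdot n Rv (q th r)))
    by (simpl; unfold qR, Rdot; field; lra).
  apply Rmult_le_compat_l; auto. left; apply Rinv_0_lt_compat, pow_lt; lra.
Qed.

End Entropy.

Theorem mainTheorem3 (n : nat) (th : rsubst) (lam : R) (Rv : nat -> R) :
  valid_rsubst n th ->
  semi_compatible n th ->
  primitive_mat n (subst_mat th) ->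
  PF_right n (subst_mat th) lam Rv ->
  (forall i, (i < n)%nat ->
     exists sl su,
       is_liminf (fun m => q th m i / ell th m i) sl /\
       is_limsup (fun m => q th m i / ell th m i) su /\
       / lam * qR n th Rv 1 <= sl /\ sl <= su /\
       su <= / (lam - 1) * qR n th Rv 1 /\
       (identical_set_cond n th -> sl = / lam * qR n th Rv 1) /\
       (disjoint_set_cond n th -> su = / (lam - 1) * qR n th Rv 1) /\
       (forall r, (1 <= r)%nat -> / lam ^ r * qR n th Rv r <= sl)) /\
  (forall r, (1 <= r)%nat ->
     / lam ^ r * qR n th Rv r <= / lam ^ (S r) * qR n th Rv (S r)).
Proof.
  intros V SC [k Hk] PF. split; [|intros r _; apply (qR_monotone n th lam Rv V SC PF)].
  intros i Hi. set (u := fun m => q th m i / ell th m i).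
  assert (Hu0 : forall m, 0 <= u m) by (intro m; apply (ratio_nonneg n th V SC m i Hi)).
  pose proof (upper_bound n th lam Rv V SC PF k Hk i Hi) as Hup.
  destruct (liminf_exists u 0 _ Hu0 (Hup 1 Rlt_0_1)) as [sl Hsl].
  destruct (limsup_exists u 0 _ Hu0 (Hup 1 Rlt_0_1)) as [su Hsu].
  assert (Hlow : forall r, / lam ^ r * qR n th Rv r <= sl)
    by (intro r; apply (liminf_ge u _ _ Hsl), (lower_bound n th lam Rv V SC PF k Hk r i Hi)).
  assert (Hsup : su <= / (lam - 1) * qR n th Rv 1) by (apply (limsup_le u _ _ Hsu), Hup).
  assert (Hle : sl <= su) by (apply (liminf_le_limsup u); auto).
  exists sl, su.
  refine (conj Hsl (conj Hsu (conj _ (conj Hle (conj Hsup (conj _ (conj _ (fun r _ => Hlow r)))))))).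
  - pose proof (Hlow 1%nat) as H1. rewrite pow_1 in H1. exact H1.
  - intro ID. apply (liminf_conv u _ _ Hsl), (identical_limit n th lam Rv V SC PF k Hk i ID Hi).
  - intro DJ. apply Rle_antisym; auto. apply le_eps. intros eps Heps.
    destruct (disjoint_lower_approx n th lam Rv V SC PF DJ eps Heps) as [r Hr].
    specialize (Hlow r). lra.
Qed.
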